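(* Let $S$ be the group defined in the context. Then $S$ contains no subgroup isomorphic to $(\mathbb{Z}/2)^5$. The group $S$ contains exactly eight subgroups isomorphic to $(\mathbb{Z}/2)^4$. These form three conjugacy classes in $S$: two classes contain two subgroups each, and one class contains four subgroups.
   Context: Let $S$ be the group generated by $v_1,v_2,v_3,s,t$, where $v_1,v_2,v_3$ commute, each has order $4$, and together generate $(\mathbb{Z}/4)^3$. The elements $s,t$ generate $D_8=\langle t,s\mid t^2=s^4=(ts)^2=1\rangle$, which acts on $(\mathbb{Z}/4)^3$ by conjugation. Writing $x^y=yxy^{-1}$, the action is $$v_1^t=v_3^{-1},\quad v_2^t=v_2^{-1},\quad v_1^s=v_2,\quad v_2^s=v_3,\quad v_3^s=v_2^{-1}v_1v_3.$$ So $S=(\mathbb{Z}/4)^3\rtimes D_8$ has order $2^9$. *)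

From HB Require Import structures.
From mathcomp Require Import all_boot all_order all_algebra all_fingroup all_solvable.
Set Implicit Arguments. Unset Strict Implicit. Unset Printing Implicit Defensive.
Import GRing.Theory.

(* The group S = (Z/4)^3 x| D8 is realised faithfully as a group of affine
   permutations of the 64-element set (Z/4)^3 = 'Z_4 * 'Z_4 * 'Z_4
   (coordinates w.r.t. the basis v1, v2, v3):
   - v_i acts as translation by the i-th basis vector;
   - s acts by the linear map M_s with M_s e1 = e2, M_s e2 = e3,
     M_s e3 = e1 - e2 + e3   (i.e. v_i^s = s v_i s^-1 as in the paper);
   - t acts by the linear map M_t with M_t e1 = -e3, M_t e2 = -e2, M_t e3 = -e1.
   Since the D8-action on (Z/4)^3 is faithful, the group generated is
   isomorphic to the semidirect product S of the paper (order 2^9). *)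

Definition pt : finType := ('Z_4 * 'Z_4 * 'Z_4)%type.

Local Open Scope ring_scope.

Definition fv1 (x : pt) : pt := let: (a, b, c) := x in (a + 1, b, c).
Definition fv2 (x : pt) : pt := let: (a, b, c) := x in (a, b + 1, c).
Definition fv3 (x : pt) : pt := let: (a, b, c) := x in (a, b, c + 1).
Definition gv1 (x : pt) : pt := let: (a, b, c) := x in (a - 1, b, c).
Definition gv2 (x : pt) : pt := let: (a, b, c) := x in (a, b - 1, c).
Definition gv3 (x : pt) : pt := let: (a, b, c) := x in (a, b, c - 1).
(* a e1 + b e2 + c e3  |->  a e2 + b e3 + c (e1 - e2 + e3) *)
Definition fs (x : pt) : pt := let: (a, b, c) := x in (c, a - c, b + c).
Definition gs (x : pt) : pt := let: (a, b, c) := x in (b + a, c - a, a).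
(* a e1 + b e2 + c e3  |->  - a e3 - b e2 - c e1 *)
Definition ft (x : pt) : pt := let: (a, b, c) := x in (- c, - b, - a).

Lemma fv1K : cancel fv1 gv1.
Proof. by case=> [[a b] c] /=; rewrite addrK. Qed.
Lemma fv2K : cancel fv2 gv2.
Proof. by case=> [[a b] c] /=; rewrite addrK. Qed.
Lemma fv3K : cancel fv3 gv3.
Proof. by case=> [[a b] c] /=; rewrite addrK. Qed.
Lemma fsK : cancel fs gs.
Proof.
by case=> [[a b] c] /=; rewrite subrK addrK.
Qed.
Lemma ftK : cancel ft ft.
Proof. by case=> [[a b] c] /=; rewrite !opprK. Qed.

Definition v1 : {perm pt} := perm (can_inj fv1K).
Definition v2 : {perm pt} := perm (can_inj fv2K).
Definition v3 : {perm pt} := perm (can_inj fv3K).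
Definition s : {perm pt} := perm (can_inj fsK).
Definition t : {perm pt} := perm (can_inj ftK).

Local Close Scope ring_scope.

Definition S : {group {perm pt}} := <<[set v1; v2; v3; s; t]>>%G.

Definition elab2 (n : nat) : {group 'rV['Z_2]_n} := [set: 'rV['Z_2]_n]%G.

Definition E4subs : {set {group {perm pt}}} :=
  [set H : {group {perm pt}} | (H \subset S) && (H \isog elab2 4)].

Definition E4classes : {set {set {group {perm pt}}}} :=
  [set orbit 'JG S H | H in E4subs].

From mathcomp Require Import all_boot all_order all_algebra all_fingroup all_solvable.
From mathcomp Require Import mxabelem ring.
Set Implicit Arguments. Unset Strict Implicit. Unset Printing Implicit Defensive.
Import GRing.Theory.

(* Every element of S acts on (Z/4)^3 as an affine map x |-> M x + b, with M
   in the image of D8, so S is faithfully encoded by the 512 pairs (M, b);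
   products, squares and commutators of elements are then evaluated on these
   codes.  Let H <= S be elementary abelian with |H| >= 16.  The translations
   contain only 8 elements of order at most 2, so H has an element x with
   non-trivial linear part; fewer than 16 involutions commute with x and have
   linear part 1 or that of x, so H has a further element y with neither.
   Then H lies in the set of involutions centralising x and y, and evaluation
   shows that whenever this set has at least 16 elements, it is one of eight
   elementary abelian groups of order exactly 16.  Their conjugacy classes are
   found by conjugating with the five generators of S. *)

Local Open Scope group_scope.

Lemma card_elab2 n : #|elab2 n| = (2 ^ n)%N.
Proof. by rewrite cardsT card_mx card_ord mul1n. Qed.

Lemma isog_elab2 (gT : finGroupType) (H : {group gT}) n :
  (H \isog elab2 n) = 2.-abelem H && (#|H| == 2 ^ n)%N.
Proof.
by rewrite isog_sym (isog_abelem_card H (@mx_Fp_abelem 2 1 n isT)) card_elab2.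
Qed.

Lemma exists_notin_map (aT : finType) (T : eqType) (A : {pred aT})
    (f : aT -> T) (r : seq T) :
  {in A &, injective f} -> size r < #|A| -> exists2 x, x \in A & f x \notin r.
Proof.
move=> injf ltrA.
case: (pickP [pred x in A | f x \notin r]) => [x /andP[Ax fx] | none].
  by exists x.
suff : #|A| <= size r by rewrite leqNgt ltrA.
rewrite cardE -(size_map f); apply: uniq_leq_size.
  by rewrite map_inj_in_uniq ?enum_uniq // => x y; rewrite !mem_enum; apply: injf.
move=> y /mapP[x]; rewrite mem_enum => Ax ->.
by have := none x; rewrite /= Ax /= => /negbFE.
Qed.

Lemma card_set_in_filter (T : finType) (r : seq T) (P : pred T) :
  uniq r -> #|[set x in [set y in r] | P x]| = count P r.
Proof.
move=> ur; rewrite -size_filter; have /card_uniqP <- := filter_uniq P ur.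
by apply: eq_card => x; rewrite !inE mem_filter andbC.
Qed.

Lemma orbit_JG_gen (gT : finGroupType) (A : {set gT}) (X : {set {group gT}})
    (H : {group gT}) :
  H \in X -> {in A & X, forall a K, (K :^ a)%G \in X} ->
  orbit 'JG <<A>> H \subset X.
Proof.
move=> XH AX; pose N := [set a | [forall K in X, (K :^ a)%G \in X]].
have gN : group_set N.
  apply/group_setP; split=> [|a b]; rewrite !inE.
    apply/forall_inP => K XK.
    by have -> : (K :^ 1)%G = K by apply: val_inj; rewrite /= conjsg1.
  move=> /forall_inP Na /forall_inP Nb; apply/forall_inP => K XK.
  have -> : (K :^ (a * b))%G = ((K :^ a) :^ b)%G.
    by apply: val_inj; rewrite /= conjsgM.
  exact: Nb (Na K XK).
have sAN : <<A>> \subset N.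
  rewrite -(gen_set_id gN) genS //; apply/subsetP => a Aa.
  by rewrite inE; apply/forall_inP => K XK; apply: AX.
apply/subsetP => _ /orbitP[a Aa <-].
by have := subsetP sAN a Aa; rewrite inE => /forall_inP; apply.
Qed.

(* Like [undup], but each item is looked up in the (short) result rather than
   in the (long) rest of the input. *)
Definition dedup (T : eqType) (r : seq T) : seq T :=
  foldr (fun x acc => if x \in acc then acc else x :: acc) [::] r.

Lemma mem_dedup (T : eqType) (r : seq T) : dedup r =i r.
Proof.
elim: r => [|x r IH] y //=; rewrite inE -IH.
by case: ifP => [xr|_]; rewrite ?inE //; case: eqP => // ->.
Qed.

Section CodedGroup.

Variables (gT : finGroupType) (G : {group gT}) (T : eqType).
Variables (mulc : T -> T -> T) (c1 : T) (codes : seq T) (rho : gT -> T).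

Record coding : Prop := Coding {
  rhoM : {in G &, {morph rho : x y / (x * y)%g >-> mulc x y}};
  rho1 : rho 1%g = c1;
  rho_inj : {in G &, injective rho};
  rho_codes : {in G, forall g, rho g \in codes};
  rho_onto : {in codes, forall c, exists2 g, g \in G & rho g = c};
  codes_uniq : uniq codes }.

Hypothesis cG : coding.

Definition decode (L : seq T) : {set gT} := [set g in G | rho g \in L].

Definition sqrt1 : seq T := [seq c <- codes | mulc c c == c1].

Definition centc (L : seq T) (x : T) : seq T := [seq c <- L | mulc x c == mulc c x].

Definition elab_codes (L : seq T) : bool :=
  [&& c1 \in L, all (fun c => mulc c c == c1) L &
      all (fun c => all (fun d => (mulc c d \in L) && (mulc c d == mulc d c)) L) L].

(* [conj_to (rho g) L L'] says that [L * g] is contained in [g * L'], i.e.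
   that conjugation by [g] maps [decode L] into [decode L']; unlike the
   conjugates themselves, this needs no inverse codes. *)
Definition conj_to (c : T) (L L' : seq T) : bool :=
  all (mem [seq mulc c d | d <- L']) [seq mulc h c | h <- L].

Definition abelem_candidates (U : eqType) (part : T -> U) (k : nat) :=
  let R := sqrt1 in
  [seq L <- [seq centc (centc R x) y
            | x <- [seq x <- R | part x != part c1],
              y <- [seq y <- centc R x | part y \notin [:: part c1; part x]]]
  | k <= size L].

Lemma card_decode L : uniq L -> {subset L <= codes} -> #|decode L| = size L.
Proof.
move=> uL sL; rewrite cardE -(size_map rho); apply/perm_size/uniq_perm => //.
  rewrite map_inj_in_uniq ?enum_uniq // => x y.
  by rewrite !mem_enum !inE => /andP[Gx _] /andP[Gy _]; apply: (rho_inj cG).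
move=> c; apply/mapP/idP => [[x] | Lc].
  by rewrite mem_enum inE => /andP[_ Lx] ->.
have [x Gx xc] := rho_onto cG (sL c Lc).
by exists x; rewrite // mem_enum inE Gx xc.
Qed.

Lemma elab_codes_group L : elab_codes L -> group_set (decode L).
Proof.
case/and3P=> L1 _ /allP mulL; apply/group_setP; split.
  by rewrite inE group1 (rho1 cG).
move=> x y; rewrite !inE => /andP[Gx Lx] /andP[Gy Ly].
by rewrite groupM // (rhoM cG) //; case/andP: (allP (mulL _ Lx) _ Ly).
Qed.

Lemma elab_codes_abelem L : elab_codes L -> 2.-abelem <<decode L>>.
Proof.
move=> eL; have /and3P[_ /allP sqL /allP mulL] := eL.
apply/abelemP => //; rewrite /= (gen_set_id (elab_codes_group eL)); split.
  apply/centsP => x /setIdP[Gx Lx] y /setIdP[Gy Ly].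
  apply: (rho_inj cG); rewrite ?groupM // !(rhoM cG) //.
  by case/andP: (allP (mulL _ Lx) _ Ly) => _ /eqP.
move=> x /setIdP[Gx Lx]; apply: (rho_inj cG); rewrite ?groupX //.
by rewrite expgS expg1 (rhoM cG) // (rho1 cG); apply/eqP/sqL.
Qed.

Lemma conj_to_subset g L L' :
  g \in G -> {subset L' <= codes} -> conj_to (rho g) L L' ->
  decode L :^ g \subset decode L'.
Proof.
move=> Gg sL' /allP gLL'; apply/subsetP => x.
rewrite mem_conjg inE => /andP[Gxg Lxg].
have Gx : x \in G by rewrite -(groupJr _ (groupVr Gg)).
have /mapP[d L'd E] := gLL' _ (map_f (mulc^~ (rho g)) Lxg).
have [y Gy yd] := rho_onto cG (sL' d L'd).
have /mulgI -> : g * x = g * y.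
  apply: (rho_inj cG); rewrite ?groupM //.
  by rewrite conjgCV (rhoM cG Gxg Gg) E -yd (rhoM cG Gg Gy).
by rewrite inE Gy yd.
Qed.

Lemma abelem_candidates_subseq (U : eqType) (part : T -> U) k L :
  L \in abelem_candidates part k -> subseq L codes.
Proof.
rewrite /abelem_candidates mem_filter => /andP[_ /allpairsPdep[x [y [_ _ ->]]]].
by do 2!apply: subseq_trans (filter_subseq _ _) _; apply: filter_subseq.
Qed.

Lemma abelem_candidatesP (U : eqType) (part : T -> U) k (H : {group gT}) :
    size [seq c <- sqrt1 | part c == part c1] < k ->
    {in sqrt1, forall x, part x != part c1 ->
       size [seq c <- centc sqrt1 x | part c \in [:: part c1; part x]] < k} ->
    H \subset G -> 2.-abelem H -> k <= #|H| ->
  exists2 L, L \in abelem_candidates part k & H \subset decode L.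
Proof.
move=> few_trans few_near sHG /abelemP[//|cHH H2] kH.
have GH x : x \in H -> x \in G := subsetP sHG x.
have injH : {in H &, injective rho}.
  by move=> x y Hx Hy; apply: (rho_inj cG); apply: GH.
have rho_sqrt1 x : x \in H -> rho x \in sqrt1.
  move=> Hx; rewrite mem_filter (rho_codes cG) ?GH // andbT.
  by rewrite -(rhoM cG) ?GH // -(rho1 cG) -(H2 x Hx) expgS expg1.
have rhoC x y : x \in H -> y \in H -> mulc (rho x) (rho y) == mulc (rho y) (rho x).
  by move=> Hx Hy; rewrite -!(rhoM cG) ?GH // (centsP cHH).
have rho_cent x y : x \in H -> y \in H -> rho y \in centc sqrt1 (rho x).
  by move=> Hx Hy; rewrite mem_filter rhoC ?rho_sqrt1.
have [x Hx] := exists_notin_map injH (leq_trans few_trans kH).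
rewrite mem_filter rho_sqrt1 // andbT => x_lin.
have [y Hy] := exists_notin_map injH (leq_trans (few_near _ (rho_sqrt1 x Hx) x_lin) kH).
rewrite mem_filter rho_cent // andbT => y_lin.
pose L := centc (centc sqrt1 (rho x)) (rho y).
have sHL : H \subset decode L.
  by apply/subsetP => z Hz; rewrite inE GH //= mem_filter rhoC ?rho_cent.
have sLc : subseq L codes.
  by do 2!apply: subseq_trans (filter_subseq _ _) _; apply: filter_subseq.
exists L => //; rewrite /abelem_candidates mem_filter; apply/andP; split.
  rewrite -(card_decode (subseq_uniq sLc (codes_uniq cG)) (mem_subseq sLc)).
  exact: leq_trans kH (subset_leq_card sHL).
apply: allpairs_f_dep; first by rewrite mem_filter x_lin rho_sqrt1.
by rewrite mem_filter y_lin rho_cent.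
Qed.

End CodedGroup.

Local Close Scope group_scope.

(** * Affine codes of the elements of S *)

Definition vec := (nat * nat * nat)%type.
Definition mx := (vec * vec * vec)%type.
Definition code := (mx * vec)%type.

(* Codes store entries of Z/4 as naturals below 4: evaluation is much faster
   on [nat] than on ['Z_4].  A matrix is given by its three columns. *)
Definition vadd (u v : vec) : vec :=
  ((u.1.1 + v.1.1) %% 4, (u.1.2 + v.1.2) %% 4, (u.2 + v.2) %% 4).
Definition vscale (a : nat) (u : vec) : vec := (a * u.1.1, a * u.1.2, a * u.2).
Definition lin (M : mx) (x : vec) : vec :=
  vadd (vadd (vscale x.1.1 M.1.1) (vscale x.1.2 M.1.2)) (vscale x.2 M.2).
Definition mxmul (N M : mx) : mx := (lin N M.1.1, lin N M.1.2, lin N M.2).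

(* [mulc c d] is "first c, then d", matching [(g * h) x = h (g x)]. *)
Definition mulc (c d : code) : code := (mxmul d.1 c.1, vadd (lin d.1 c.2) d.2).

Definition I3 : mx := ((1, 0, 0), (0, 1, 0), (0, 0, 1)).
Definition c1 : code := (I3, (0, 0, 0)).
Definition cpow (c : code) (n : nat) : code := iter n (mulc^~ c) c1.

Definition cv1 : code := (I3, (1, 0, 0)).
Definition cv2 : code := (I3, (0, 1, 0)).
Definition cv3 : code := (I3, (0, 0, 1)).
Definition cs : code := (((0, 1, 0), (0, 0, 1), (1, 3, 1)), (0, 0, 0)).
Definition ct : code := (((0, 0, 3), (0, 3, 0), (3, 0, 0)), (0, 0, 0)).

Definition rvec (u : vec) : bool := [&& u.1.1 < 4, u.1.2 < 4 & u.2 < 4].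
Definition reduced (c : code) : bool :=
  [&& rvec c.1.1.1, rvec c.1.1.2, rvec c.1.2 & rvec c.2].

Lemma rvec_vadd u v : rvec (vadd u v).
Proof. by rewrite /rvec /= !ltn_pmod. Qed.

Lemma reduced_mulc c d : reduced (mulc c d).
Proof. by rewrite /reduced /= !rvec_vadd. Qed.

Local Open Scope ring_scope.

Definition act (c : code) (x : pt) : pt :=
  let: ((a1, a2, a3), (b1, b2, b3), (d1, d2, d3), (u1, u2, u3)) := c in
  let: (x1, x2, x3) := x in
  (x1 * a1%:R + x2 * b1%:R + x3 * d1%:R + u1%:R,
   x1 * a2%:R + x2 * b2%:R + x3 * d2%:R + u2%:R,
   x1 * a3%:R + x2 * b3%:R + x3 * d3%:R + u3%:R).

Lemma Z4_mod n : ((n %% 4)%N%:R : 'Z_4) = n%:R.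
Proof. exact: Zp_nat_mod. Qed.

Lemma Z4_3 : (3%:R : 'Z_4) = -1.
Proof. exact: val_inj. Qed.

Lemma val_Z4 n : (n < 4)%N -> (n%:R : 'Z_4) = n :> nat.
Proof. by move=> lt_n4; rewrite val_Zp_nat // modn_small. Qed.

Lemma act_mulc c d x : act (mulc c d) x = act d (act c x).
Proof.
case: c d x => [[[[[m1 m2] m3] [[m4 m5] m6]] [[m7 m8] m9]] [[b1 b2] b3]].
case=> [[[[[n1 n2] n3] [[n4 n5] n6]] [[n7 n8] n9]] [[d1 d2] d3]].
case=> [[x1 x2] x3] /=; rewrite !(Z4_mod, natrD, natrM).
by congr (_, _, _); ring.
Qed.

Definition e0 : pt := (0, 0, 0).
Definition e1 : pt := (1, 0, 0).
Definition e2 : pt := (0, 1, 0).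
Definition e3 : pt := (0, 0, 1).

Definition enc (x : pt) : vec := let: (a, b, c) := x in (a : nat, b : nat, c : nat).

Definition rho (g : {perm pt}) : code :=
  ((enc (g e1 - g e0), enc (g e2 - g e0), enc (g e3 - g e0)), enc (g e0)).

Lemma subpE (a b c a' b' c' : 'Z_4) :
  ((a, b, c) - (a', b', c') : pt) = (a - a', b - b', c - c').
Proof. by []. Qed.

Lemma rho_act (g : {perm pt}) c : reduced c -> g =1 act c -> rho g = c.
Proof.
case: c => [[[[[m1 m2] m3] [[m4 m5] m6]] [[m7 m8] m9]] [[b1 b2] b3]].
rewrite /reduced /rvec /=.
case/and4P=> /and3P[? ? ?] /and3P[? ? ?] /and3P[? ? ?] /and3P[? ? ?] E.
rewrite /rho !E /act /e0 /e1 /e2 /e3; cbv beta iota.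
rewrite !mul0r !mul1r !add0r !addr0 !subpE !addrK /enc; cbv beta iota.
by rewrite !val_Z4.
Qed.

Lemma gens_act :
  [/\ v1 =1 act cv1, v2 =1 act cv2, v3 =1 act cv3, s =1 act cs & t =1 act ct].
Proof.
split=> -[[a b] c]; rewrite permE;
  cbv beta iota delta [act fv1 fv2 fv3 fs ft cv1 cv2 cv3 cs ct I3];
  rewrite ?Z4_3; by congr (_, _, _); ring.
Qed.

Local Close Scope ring_scope.

Definition Aff : {set {perm pt}} :=
  [set g : {perm pt} | [forall x, g x == act (rho g) x]].

Lemma AffP (g : {perm pt}) : reflect (g =1 act (rho g)) (g \in Aff).
Proof. by rewrite inE; apply: (iffP forallP) => E x; apply/eqP; apply: E. Qed.

Lemma mem_Aff (g : {perm pt}) c : reduced c -> g =1 act c -> g \in Aff /\ rho g = c.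
Proof. by move=> rc E; have rg := rho_act rc E; split=> //; apply/AffP; rewrite rg. Qed.

Local Open Scope group_scope.

Lemma Aff_mul g h :
  g \in Aff -> h \in Aff -> g * h \in Aff /\ rho (g * h) = mulc (rho g) (rho h).
Proof.
move=> /AffP Eg /AffP Eh; apply: mem_Aff (reduced_mulc _ _) _ => x.
by rewrite permM act_mulc -Eg -Eh.
Qed.

Lemma Aff1 : 1 \in Aff /\ rho 1 = c1.
Proof.
by apply: mem_Aff => // -[[a b] c]; rewrite perm1 /=; congr (_, _, _); ring.
Qed.

Local Close Scope group_scope.

Definition vecs : seq vec :=
  [seq (ab, e) | ab <- [seq (a, b) | a <- iota 0 4, b <- iota 0 4], e <- iota 0 4].

Definition D8codes : seq code :=
  [seq mulc (cpow cs i) (cpow ct j) | i <- iota 0 4, j <- iota 0 2].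

Definition trcode (b : vec) : code :=
  mulc (mulc (cpow cv1 b.1.1) (cpow cv2 b.1.2)) (cpow cv3 b.2).

Definition Scodes : seq code := [seq (d.1, b) | d <- D8codes, b <- vecs].

Lemma Scodes_uniq : uniq Scodes.
Proof. by vm_compute. Qed.

Lemma c1_in : c1 \in Scodes.
Proof. by vm_compute. Qed.

Lemma gen_codes_in :
  [&& cv1 \in Scodes, cv2 \in Scodes, cv3 \in Scodes, cs \in Scodes & ct \in Scodes].
Proof. by vm_compute. Qed.

Lemma D8codes_closed :
  all (fun d => all (fun d' => mxmul d'.1 d.1 \in map fst D8codes) D8codes) D8codes.
Proof. by vm_compute. Qed.

Lemma word_codes :
  all (fun d => all (fun b => mulc d (trcode b) == (d.1, b)) vecs) D8codes.
Proof. by vm_compute. Qed.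

Lemma mem_vecs u : rvec u -> u \in vecs.
Proof.
case: u => [[a b] e] /and3P[/= ha hb he].
by apply: allpairs_f; [apply: allpairs_f|]; rewrite mem_iota.
Qed.

Lemma Scodes_mulc c d : c \in Scodes -> d \in Scodes -> mulc c d \in Scodes.
Proof.
move=> /allpairsP[[l b] [/= lL _ ->]] /allpairsP[[l' b'] [/= l'L _ ->]].
have /mapP[l'' l''L El''] := allP (allP D8codes_closed l lL) l' l'L.
by rewrite /mulc /= El''; apply: allpairs_f => //; apply/mem_vecs/rvec_vadd.
Qed.

Definition AffS : {set {perm pt}} := [set g in Aff | rho g \in Scodes].

Lemma AffS_group : group_set AffS.
Proof.
have [A1 r1] := Aff1; apply/group_setP; split.
  by rewrite inE A1 r1 c1_in.
move=> g h /setIdP[Ag Sg] /setIdP[Ah Sh]; have [Agh rgh] := Aff_mul Ag Ah.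
by rewrite inE Agh rgh (Scodes_mulc Sg Sh).
Qed.

Lemma rho_gens :
  [/\ rho v1 = cv1, rho v2 = cv2, rho v3 = cv3, rho s = cs & rho t = ct].
Proof. by have [? ? ? ? ?] := gens_act; split; apply: rho_act. Qed.

Lemma S_sub_AffS : S \subset AffS.
Proof.
have inAffS (g : {perm pt}) c : g =1 act c -> reduced c -> c \in Scodes -> g \in AffS.
  by move=> E rc Sc; have [Ag rg] := mem_Aff rc E; rewrite inE Ag rg.
have [? ? ? ? ?] := gens_act; have /and5P[? ? ? ? ?] := gen_codes_in.
rewrite -(gen_set_id AffS_group) genS // !subUset !sub1set.
by rewrite -!andbA; apply/and5P; split; apply: inAffS.
Qed.

Local Open Scope group_scope.

Lemma S_Aff g : g \in S -> g \in Aff /\ rho g \in Scodes.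
Proof. by move/(subsetP S_sub_AffS)/setIdP. Qed.

Lemma rhoM_S : {in S &, {morph rho : g h / g * h >-> mulc g h}}.
Proof. by move=> g h /S_Aff[Ag _] /S_Aff[Ah _]; case: (Aff_mul Ag Ah). Qed.

Lemma rhoX_S g n : g \in S -> rho (g ^+ n) = cpow (rho g) n.
Proof.
move=> Sg; elim: n => [|n IHn]; first by case: Aff1.
by rewrite expgSr rhoM_S ?groupX // IHn.
Qed.

Lemma gens_in_S : [/\ v1 \in S, v2 \in S, v3 \in S, s \in S & t \in S].
Proof. by split; apply: mem_gen; rewrite !inE eqxx ?orbT. Qed.

Lemma rho_onto_S : {in Scodes, forall c, exists2 g, g \in S & rho g = c}.
Proof.
move=> _ /allpairsP[[d b] [/= dL bV ->]].
have [Sv1 Sv2 Sv3 Ss St] := gens_in_S; have [rv1 rv2 rv3 rs rt] := rho_gens.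
case/allpairsP: (dL) => -[i j] [/= _ _ dE].
exists (s ^+ i * t ^+ j * (v1 ^+ b.1.1 * v2 ^+ b.1.2 * v3 ^+ b.2));
  first by rewrite !groupM ?groupX.
rewrite !rhoM_S ?groupM ?groupX // !rhoX_S // rv1 rv2 rv3 rs rt -dE.
by apply/eqP; apply: (allP (allP word_codes d dL)).
Qed.

Lemma S_coding : coding S mulc c1 Scodes rho.
Proof.
split; [exact: rhoM_S | by case: Aff1 | | | exact: rho_onto_S | exact: Scodes_uniq].
  move=> g h /S_Aff[/AffP Eg _] /S_Aff[/AffP Eh _] E.
  by apply/permP => x; rewrite Eg Eh E.
by move=> g /S_Aff[].
Qed.

Local Close Scope group_scope.

(** * The elementary abelian subgroups of order 16 *)

Definition E4codes : seq (seq code) := dedup (abelem_candidates mulc c1 Scodes fst 16).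

Lemma few_translations : size [seq c <- sqrt1 mulc c1 Scodes | c.1 == c1.1] < 16.
Proof. by vm_compute. Qed.

Lemma few_near :
  all (fun x => (x.1 == c1.1) ||
         (size [seq c <- centc mulc (sqrt1 mulc c1 Scodes) x
               | c.1 \in [:: c1.1; x.1]] < 16))
    (sqrt1 mulc c1 Scodes).
Proof. by vm_compute. Qed.

Lemma E4codes_ok :
  (size E4codes == 8) && all (fun L => (size L == 16) && elab_codes mulc c1 L) E4codes.
Proof. by vm_compute. Qed.

Definition E4code (n : nat) : seq code := nth [::] E4codes n.

Lemma E4codes_distinct :
  all (fun n => all (fun m => (n == m) || ~~ all (mem (E4code m)) (E4code n))
                 (iota 0 8))
    (iota 0 8).
Proof. by vm_compute. Qed.

Definition class_indices : seq (seq nat) := [:: [:: 0; 2]; [:: 1; 3; 5; 7]; [:: 4; 6]].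

Lemma class_indices_partition :
  [&& perm_eq (flatten class_indices) (iota 0 8), uniq class_indices &
      all (fun K => (K != [::]) && sorted ltn K) class_indices].
Proof. by vm_compute. Qed.

Lemma class_indices_stable :
  all (fun K => all (fun c => all (fun m => has (fun m' =>
          conj_to mulc c (E4code m) (E4code m')) K) K) [:: cv1; cv2; cv3; cs; ct])
    class_indices.
Proof. by vm_compute. Qed.

Lemma class_indices_connected :
  all (fun K => all (fun m => has (fun c =>
          conj_to mulc c (E4code (head 0 K)) (E4code m)) Scodes) K) class_indices.
Proof. by vm_compute. Qed.

Definition E4 (n : nat) : {group {perm pt}} := <<decode S rho (E4code n)>>%G.

Lemma E4code_props n : n < 8 ->
  [/\ subseq (E4code n) Scodes, size (E4code n) = 16 & elab_codes mulc c1 (E4code n)].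
Proof.
move=> ln; case/andP: E4codes_ok => /eqP size8 /allP E4ok.
have En : E4code n \in E4codes by rewrite mem_nth ?size8.
case/andP: (E4ok _ En) => /eqP sz eL; split; [|exact: sz|exact: eL].
by move: En; rewrite mem_dedup; apply: abelem_candidates_subseq.
Qed.

Lemma E4E n : n < 8 -> E4 n :=: decode S rho (E4code n).
Proof.
by case/E4code_props=> _ _ eL; rewrite /= (gen_set_id (elab_codes_group S_coding eL)).
Qed.

Lemma card_E4 n : n < 8 -> #|E4 n| = 16.
Proof.
move=> ln; have [sL <- _] := E4code_props ln.
by rewrite E4E // (card_decode S_coding (subseq_uniq sL Scodes_uniq) (mem_subseq sL)).
Qed.

Lemma E4_abelem n : n < 8 -> (2.-abelem (E4 n))%g.
Proof. by case/E4code_props=> _ _ eL; exact: (elab_codes_abelem S_coding eL). Qed.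

Lemma E4_sub n : E4 n \subset S.
Proof. by rewrite gen_subG; apply/subsetP => g /setIdP[]. Qed.

Lemma E4_classify (H : {group {perm pt}}) :
  H \subset S -> (2.-abelem H)%g -> 16 <= #|H| -> exists2 n, n < 8 & H = E4 n.
Proof.
move=> sHS aH cH; case/andP: E4codes_ok => /eqP size8 _.
have few_near' : {in sqrt1 mulc c1 Scodes, forall x, x.1 != c1.1 ->
    size [seq c <- centc mulc (sqrt1 mulc c1 Scodes) x | c.1 \in [:: c1.1; x.1]] < 16}.
  by move=> x /(allP few_near) /orP[/eqP->|->]; rewrite ?eqxx.
have [L cL sHL] := abelem_candidatesP S_coding few_translations few_near' sHS aH cH.
have EL : L \in E4codes by rewrite mem_dedup.
have [n ln EnL] : exists2 n, n < 8 & E4code n = L.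
  exists (index L E4codes); last exact: nth_index.
  by move: EL; rewrite -index_mem size8.
exists n; first exact: ln.
apply/val_inj/eqP; rewrite /= (E4E ln) EnL eqEcard sHL.
by rewrite -EnL -(E4E ln) (card_E4 ln); exact: cH.
Qed.

Lemma E4_inj n m : n < 8 -> m < 8 -> E4 n = E4 m -> n = m.
Proof.
move=> ln lm Enm; have [sLn _ _] := E4code_props ln.
have := allP (allP E4codes_distinct n _) m; rewrite !mem_iota.
case/(_ ln lm)/orP => [/eqP // | /allP[] c Lc].
have [g Sg gc] := rho_onto_S (mem_subseq sLn Lc).
have : g \in E4 n by rewrite (E4E ln) inE Sg gc.
by rewrite Enm (E4E lm) inE gc => /andP[].
Qed.

Local Open Scope group_scope.

Lemma conjg_E4 g n m : g \in S -> n < 8 -> m < 8 ->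
  conj_to mulc (rho g) (E4code n) (E4code m) -> (E4 n :^ g)%G = E4 m.
Proof.
move=> Sg ln lm gnm; have [sLm _ _] := E4code_props lm.
apply/val_inj/eqP; rewrite /= eqEcard cardJg (card_E4 ln) (card_E4 lm) leqnn andbT.
rewrite (E4E ln) (E4E lm); exact: (conj_to_subset S_coding Sg (mem_subseq sLm) gnm).
Qed.

Local Close Scope group_scope.

Definition E4set (K : seq nat) : {set {group {perm pt}}} := [set H in map E4 K].

Lemma class_indices_lt8 K k : K \in class_indices -> k \in K -> k < 8.
Proof.
case/and3P: class_indices_partition => /perm_mem flatE _ _ cK kK.
have : k \in flatten class_indices by apply/flattenP; exists K.
by rewrite flatE mem_iota.
Qed.

Lemma class_indices_sorted K : K \in class_indices -> sorted ltn K.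
Proof. by case/and3P: class_indices_partition => _ _ /allP/(_ K)/[apply]/andP[]. Qed.

Lemma head_class_indices K : K \in class_indices -> head 0 K \in K.
Proof.
case/and3P: class_indices_partition => _ _ /allP/(_ K)/[apply]/andP[].
by case: K => // k K _ _; apply: mem_head.
Qed.

Lemma mem_E4set K k :
  {in K, forall k, k < 8} -> k < 8 -> (E4 k \in E4set K) = (k \in K).
Proof.
move=> ltK lk; rewrite inE; apply/mapP/idP => [[k' k'K Ekk'] | kK].
  by rewrite (E4_inj lk (ltK k' k'K) Ekk').
by exists k.
Qed.

Lemma card_E4set K : uniq K -> {in K, forall k, k < 8} -> #|E4set K| = size K.
Proof.
move=> uK ltK; rewrite cardsE; have /card_uniqP -> : uniq (map E4 K).
  by rewrite map_inj_in_uniq // => k k' kK k'K; apply: E4_inj; apply: ltK.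
by rewrite size_map.
Qed.

Lemma orbit_E4_head K : K \in class_indices -> orbit 'JG S (E4 (head 0 K)) = E4set K.
Proof.
move=> cK; have ltK := class_indices_lt8 cK; have hK := head_class_indices cK.
apply/eqP; rewrite eqEsubset; apply/andP; split.
  apply: orbit_JG_gen; first by rewrite inE map_f.
  move=> a H Aa; rewrite inE => /mapP[k kK ->].
  have Sa : a \in S by apply: mem_gen.
  have ra : rho a \in [:: cv1; cv2; cv3; cs; ct].
    have [r1 r2 r3 r4 r5] := rho_gens; move: Aa; rewrite !inE.
    case/orP=> [/orP[/orP[/orP[]|]|]|] /eqP->;
      by rewrite ?(r1, r2, r3, r4, r5) eqxx ?orbT.
  have := allP (allP (allP class_indices_stable K cK) _ ra) k kK.
  case/hasP=> k' k'K akk'; rewrite (conjg_E4 Sa (ltK k kK) (ltK k' k'K) akk').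
  by rewrite inE map_f.
apply/subsetP => H; rewrite inE => /mapP[k kK ->].
have /hasP[c Sc ck] := allP (allP class_indices_connected K cK) k kK.
have [g Sg gc] := rho_onto_S Sc; apply/orbitP; exists g; first exact: Sg.
by rewrite -gc in ck; exact: (conjg_E4 Sg (ltK _ hK) (ltK k kK) ck).
Qed.

Lemma orbit_E4 K k : K \in class_indices -> k \in K -> orbit 'JG S (E4 k) = E4set K.
Proof.
move=> cK kK; have ltK := class_indices_lt8 cK.
rewrite -(orbit_E4_head cK); apply/orbit_eqP.
by rewrite (orbit_E4_head cK) (mem_E4set ltK (ltK k kK)).
Qed.

Lemma E4subsE : E4subs = E4set (iota 0 8).
Proof.
apply/setP => H; rewrite !in_set isog_elab2; apply/andP/mapP.
  case=> sHS /andP[aH /eqP cH].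
  have [|n ln ->] := E4_classify sHS aH; first by rewrite cH.
  by exists n; rewrite // mem_iota.
case=> n; rewrite mem_iota => /andP[_ ln] ->.
by split; [exact: E4_sub | rewrite E4_abelem // card_E4].
Qed.

Lemma E4classesE : E4classes = [set C in map E4set class_indices].
Proof.
case/and3P: class_indices_partition => /perm_mem flatE _ _.
apply/setP => C; rewrite in_set; apply/imsetP/mapP.
  case=> H; rewrite E4subsE in_set => /mapP[k]; rewrite mem_iota => /andP[_ lk] -> ->.
  have : k \in flatten class_indices by rewrite flatE mem_iota.
  by case/flattenP=> K cK kK; exists K; rewrite // (orbit_E4 cK kK).
case=> K cK ->; exists (E4 (head 0 K)); last by rewrite orbit_E4_head.
rewrite E4subsE in_set map_f // mem_iota.
exact: class_indices_lt8 cK (head_class_indices cK).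
Qed.

Lemma uniq_E4sets : uniq (map E4set class_indices).
Proof.
case/and3P: class_indices_partition => _ uC _.
rewrite map_inj_in_uniq // => K K' cK cK' EKK'.
apply: (irr_sorted_eq ltn_trans ltnn); rewrite ?class_indices_sorted // => k.
have ltK := class_indices_lt8 cK; have ltK' := class_indices_lt8 cK'.
case: (ltnP k 8) => [lk | gek].
  by rewrite -(mem_E4set ltK lk) -(mem_E4set ltK' lk) EKK'.
by apply/idP/idP => kK; [have := ltK k kK | have := ltK' k kK]; rewrite ltnNge gek.
Qed.

Lemma card_E4classes k :
  #|[set C in E4classes | #|C| == k]| = count (fun K => size K == k) class_indices.
Proof.
rewrite E4classesE card_set_in_filter ?uniq_E4sets // count_map.
apply: eq_in_count => K cK /=.
rewrite card_E4set //; last by move=> m; apply: class_indices_lt8.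
exact: sorted_uniq ltn_trans ltnn _ (class_indices_sorted cK).
Qed.

Theorem corollary2p4 :
  (forall H : {group {perm pt}}, H \subset S -> ~~ (H \isog elab2 5))
  /\ #|E4subs| = 8
  /\ #|E4classes| = 3
  /\ #|[set C in E4classes | #|C| == 2]| = 2
  /\ #|[set C in E4classes | #|C| == 4]| = 1.
Proof.
split.
  move=> H sHS; rewrite isog_elab2; apply/negP => /andP[aH cH].
  have [|n ln En] := E4_classify sHS aH; first by rewrite (eqP cH).
  by rewrite En (card_E4 ln) in cH.
split; first by rewrite E4subsE card_E4set ?iota_uniq // => k; rewrite mem_iota.
split; last by rewrite !card_E4classes.
by rewrite E4classesE cardsE; have /card_uniqP -> := uniq_E4sets; rewrite size_map.
Qed.
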